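(* Let $r>0$, $\varepsilon_0>0$, let $n\ge 1$ be an integer, and let $\varphi_0$ be an axially symmetric external potential, harmonic inside the ball of radius $r$ centered at the origin, whose values on the axis are a polynomial of degree $n$: \[ -\varphi_0(s)=\sum_{i=1}^{n+1} b_i s^{i-1}. \] Let $\sigma$ be the polynomial of degree at most $n$ on $[-r,r]$ satisfying \[ \int_{-r}^{r}\frac{r\,\sigma(z)}{\sqrt{s^2+r^2-2sz}}\,dz=-2\varepsilon_0\,\varphi_0(s)\qquad(-r<s<r). \] Then the force acting on the ball, $\mathcal F=\frac{\pi}{\varepsilon_0}\int_{-r}^{r}z\,\sigma(z)^2\,dz$, is \[ \mathcal F=4\pi\varepsilon_0\sum_{i=1}^{n} i\,r^{2i-1}\,b_i\,b_{i+1}. \]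
   Context: Physical setting: a grounded conducting ball of radius $r$ centered at the origin on the axis of an axially symmetric external field with potential $\varphi_0$; $\varepsilon_0$ is the electric constant; $\sigma(z)$ is the induced surface charge density as a function of the axial coordinate $z$. The force expression comes from the electric pressure $p=-\sigma^2/(2\varepsilon_0)$ integrated over the sphere. *)

From Stdlib Require Import Reals.
From Coquelicot Require Import Coquelicot.
Open Scope R_scope.

Definition peval (c : nat -> R) (d : nat) (x : R) : R :=
  sum_f_R0 (fun k => c k * x ^ k) d.

(* Rescaled to the unit ball, the charge density is a Legendre series
   sigma z = sum_l a_l P_l (z / r).  The moments of the kernel are
   int_(-1)^1 P_l x / sqrt (1 - 2 x t + t^2) dx = 2 t^l / (2 l + 1), obtained from a
   three-term recursion, so the potential equation becomes an identity between polynomials in s,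
   which forces a_l = eps0 (2 l + 1) b_(l+1) r^(l-1).  In the force integral,
   x P_l = ((l + 1) P_(l+1) + l P_(l-1)) / (2 l + 1) and orthogonality leave only the products
   a_l a_(l+1) of neighbouring coefficients. *)

From Stdlib Require Import Reals Lra Lia Arith.
From Coquelicot Require Import Coquelicot.
Open Scope R_scope.

Fixpoint legendre (l : nat) (x : R) : R :=
  match l with
  | O => 1
  | S l' => match l' with
            | O => x
            | S l'' => ((2 * INR l' + 1) * x * legendre l' x - INR l' * legendre l'' x) / (INR l' + 1)
            end
  end.

(* The derivative of [legendre], obtained by differentiating Bonnet's recursion. *)
Fixpoint dlegendre (l : nat) (x : R) : R :=
  match l with
  | O => 0
  | S l' => match l' with
            | O => 1
            | S l'' => ((2 * INR l' + 1) * (legendre l' x + x * dlegendre l' x)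
                        - INR l' * dlegendre l'' x) / (INR l' + 1)
            end
  end.

Lemma INR_succ_pos m : 0 < INR m + 1.
Proof. pose proof (pos_INR m); lra. Qed.

Lemma legendre_succ l x :
  legendre (S l) x = ((2 * INR l + 1) * x * legendre l x - INR l * legendre (pred l) x) / (INR l + 1).
Proof. destruct l; simpl; [field | reflexivity]. Qed.

Lemma mul_legendre l x :
  x * legendre l x = ((INR l + 1) * legendre (S l) x + INR l * legendre (pred l) x) / (2 * INR l + 1).
Proof. rewrite legendre_succ. pose proof (pos_INR l). field. lra. Qed.

Lemma dlegendre_succ m x :
  dlegendre (S (S m)) x = ((2 * INR (S m) + 1) * (legendre (S m) x + x * dlegendre (S m) x)
                           - INR (S m) * dlegendre m x) / (INR (S m) + 1).
Proof. reflexivity. Qed.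

Lemma is_derive_recursion (f g : R -> R) df dg a b c x : c <> 0 ->
  is_derive f x df -> is_derive g x dg ->
  is_derive (fun y => (a * y * f y - b * g y) / c) x ((a * (f x + x * df) - b * dg) / c).
Proof.
  intros Hc Hf Hg.
  auto_derive.
  - repeat split; [exists df; exact Hf | exists dg; exact Hg].
  - replace (Derive (fun y => f y) x) with df by (symmetry; apply is_derive_unique; exact Hf).
    replace (Derive (fun y => g y) x) with dg by (symmetry; apply is_derive_unique; exact Hg).
    field. exact Hc.
Qed.

Lemma is_derive_legendre l x : is_derive (legendre l) x (dlegendre l x).
Proof.
  revert x.
  cut (forall x, is_derive (legendre l) x (dlegendre l x) /\
                 is_derive (legendre (S l)) x (dlegendre (S l) x)).
  { intros H x. apply H. }
  induction l as [|m IH]; intro x.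
  - split; simpl; auto_derive; auto.
  - split; [apply IH|].
    rewrite dlegendre_succ.
    apply (is_derive_ext (fun y => ((2 * INR (S m) + 1) * y * legendre (S m) y
                                    - INR (S m) * legendre m y) / (INR (S m) + 1))).
    { intro; reflexivity. }
    apply is_derive_recursion; [|apply IH|apply IH].
    pose proof (INR_succ_pos (S m)); lra.
Qed.

Lemma dlegendre_identities m x :
  x * dlegendre (S m) x - dlegendre m x = INR (S m) * legendre (S m) x /\
  dlegendre (S m) x - x * dlegendre m x = INR (S m) * legendre m x.
Proof.
  induction m as [|m [B C]].
  - simpl. split; lra.
  - pose proof (INR_succ_pos (S m)).
    assert (A : dlegendre (S (S m)) x - dlegendre m x = (2 * INR (S m) + 1) * legendre (S m) x).
    { rewrite dlegendre_succ.
      apply Rmult_eq_reg_r with (INR (S m) + 1); [|lra].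
      field_simplify; [|lra]. rewrite S_INR in *. nra. }
    assert (C' : dlegendre (S (S m)) x - x * dlegendre (S m) x = INR (S (S m)) * legendre (S m) x).
    { rewrite (S_INR (S m)). lra. }
    split; [|exact C'].
    rewrite (legendre_succ (S m)). simpl pred. rewrite (S_INR (S m)).
    replace ((INR (S m) + 1) * (((2 * INR (S m) + 1) * x * legendre (S m) x
                                 - INR (S m) * legendre m x) / (INR (S m) + 1)))
      with ((2 * INR (S m) + 1) * x * legendre (S m) x - INR (S m) * legendre m x) by (field; lra).
    assert (x * (dlegendre (S (S m)) x - dlegendre m x)
            = x * ((2 * INR (S m) + 1) * legendre (S m) x)) by (rewrite A; ring).
    lra.
Qed.

Lemma dlegendre_succ_sub_pred l x :
  dlegendre (S l) x - dlegendre (pred l) x = (2 * INR l + 1) * legendre l x.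
Proof.
  destruct l as [|m]; [simpl; lra|].
  destruct (dlegendre_identities m x) as [B C].
  simpl pred. rewrite dlegendre_succ. pose proof (INR_succ_pos (S m)).
  apply Rmult_eq_reg_r with (INR (S m) + 1); [|lra].
  field_simplify; [|lra]. rewrite S_INR in *. nra.
Qed.

Lemma legendre_at_1 l : legendre l 1 = 1.
Proof.
  cut (legendre l 1 = 1 /\ legendre (S l) 1 = 1); [tauto|].
  induction l as [|l [H0 H1]]; [simpl; lra|]. split; [exact H1|].
  rewrite legendre_succ. simpl pred. rewrite H0, H1. pose proof (INR_succ_pos (S l)). field. lra.
Qed.

Lemma legendre_at_m1 l : legendre l (-1) = (-1) ^ l.
Proof.
  cut (legendre l (-1) = (-1) ^ l /\ legendre (S l) (-1) = (-1) ^ S l); [tauto|].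
  induction l as [|l [H0 H1]]; [simpl; lra|]. split; [exact H1|].
  rewrite legendre_succ. simpl pred. rewrite H0, H1. pose proof (INR_succ_pos (S l)).
  simpl pow. field. lra.
Qed.

Definition cont11 (f : R -> R) := forall x, -1 <= x <= 1 -> continuous f x.
Definition int11 (f : R -> R) : R := RInt f (-1) 1.

Lemma cont11_plus f g : cont11 f -> cont11 g -> cont11 (fun x => f x + g x).
Proof. intros Hf Hg x Hx. apply (continuous_plus f g); auto. Qed.
Lemma cont11_minus f g : cont11 f -> cont11 g -> cont11 (fun x => f x - g x).
Proof. intros Hf Hg x Hx. apply (continuous_minus f g); auto. Qed.
Lemma cont11_mult f g : cont11 f -> cont11 g -> cont11 (fun x => f x * g x).
Proof. intros Hf Hg x Hx. apply (continuous_mult f g); auto. Qed.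
Lemma cont11_const c : cont11 (fun _ => c).
Proof. intros x _. apply continuous_const. Qed.
Lemma cont11_id : cont11 (fun x => x).
Proof. intros x _. apply continuous_id. Qed.
Lemma cont11_pow k : cont11 (fun x => x ^ k).
Proof.
  induction k as [|k IH]; simpl; [apply cont11_const | apply (cont11_mult _ _ cont11_id IH)].
Qed.
Lemma cont11_sum (g : nat -> R -> R) N :
  (forall l, cont11 (g l)) -> cont11 (fun x => sum_f_R0 (fun l => g l x) N).
Proof.
  intros H. induction N as [|N IH]; simpl; [apply H | apply cont11_plus; auto].
Qed.
Lemma cont11_of_derive f df : (forall x, -1 <= x <= 1 -> is_derive f x (df x)) -> cont11 f.
Proof. intros H x Hx. exact (ex_derive_continuous f x (ex_intro _ (df x) (H x Hx))). Qed.

Lemma cont11_legendre l : cont11 (legendre l).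
Proof. apply (cont11_of_derive _ (dlegendre l)). intros x _. apply is_derive_legendre. Qed.

Lemma cont11_dlegendre l : cont11 (dlegendre l).
Proof.
  cut (cont11 (dlegendre l) /\ cont11 (dlegendre (S l))); [tauto|].
  induction l as [|m [H0 H1]].
  - split; apply cont11_const.
  - split; [exact H1|].
    apply (cont11_mult (fun y => (2 * INR (S m) + 1) * (legendre (S m) y + y * dlegendre (S m) y)
                                 - INR (S m) * dlegendre m y) (fun _ => / (INR (S m) + 1)));
      [|apply cont11_const].
    apply cont11_minus; apply cont11_mult; try apply cont11_const; [|exact H0].
    apply cont11_plus; [apply cont11_legendre | apply (cont11_mult _ _ cont11_id H1)].
Qed.

Create HintDb cont11.
#[export] Hint Resolve cont11_const cont11_id cont11_pow cont11_legendre cont11_dlegendre : cont11.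

Ltac solve_cont11 :=
  repeat match goal with
  | |- forall _, _ => intro
  | |- cont11 (fun x => @?f x * @?g x) => apply (cont11_mult f g)
  | |- cont11 (fun x => @?f x + @?g x) => apply (cont11_plus f g)
  | |- cont11 (fun x => @?f x - @?g x) => apply (cont11_minus f g)
  | |- cont11 (fun x => sum_f_R0 (fun l => @?g l x) _) => apply (cont11_sum g); intro
  | |- cont11 _ => solve [eauto with cont11]
  end.

Lemma ex_RInt11 f : cont11 f -> ex_RInt f (-1) 1.
Proof.
  intros H. apply (ex_RInt_continuous (V := R_CompleteNormedModule)). intros z Hz.
  rewrite Rmin_left, Rmax_right in Hz by lra. apply H; lra.
Qed.

Lemma int11_plus f g : cont11 f -> cont11 g -> int11 (fun x => f x + g x) = int11 f + int11 g.
Proof. intros Hf Hg. exact (RInt_plus f g _ _ (ex_RInt11 f Hf) (ex_RInt11 g Hg)). Qed.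
Lemma int11_minus f g : cont11 f -> cont11 g -> int11 (fun x => f x - g x) = int11 f - int11 g.
Proof. intros Hf Hg. exact (RInt_minus f g _ _ (ex_RInt11 f Hf) (ex_RInt11 g Hg)). Qed.
Lemma int11_scal f c : cont11 f -> int11 (fun x => c * f x) = c * int11 f.
Proof. intros Hf. exact (RInt_scal f _ _ c (ex_RInt11 f Hf)). Qed.
Lemma int11_ext f g : (forall x, -1 <= x <= 1 -> f x = g x) -> int11 f = int11 g.
Proof.
  intros H. apply RInt_ext. intros x Hx.
  rewrite Rmin_left, Rmax_right in Hx by lra. apply H; lra.
Qed.
Lemma int11_sum (g : nat -> R -> R) N : (forall l, cont11 (g l)) ->
  int11 (fun x => sum_f_R0 (fun l => g l x) N) = sum_f_R0 (fun l => int11 (g l)) N.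
Proof.
  intros H. induction N as [|N IH]; simpl; [reflexivity|].
  rewrite int11_plus by solve_cont11. rewrite IH. reflexivity.
Qed.

Lemma int11_by_parts f df g dg :
  (forall x, -1 <= x <= 1 -> is_derive f x (df x) /\ is_derive g x (dg x)) ->
  cont11 df -> cont11 dg ->
  int11 (fun x => df x * g x) = f 1 * g 1 - f (-1) * g (-1) - int11 (fun x => f x * dg x).
Proof.
  intros Hd Cdf Cdg.
  assert (Cf : cont11 f) by (apply (cont11_of_derive _ df); apply Hd).
  assert (Cg : cont11 g) by (apply (cont11_of_derive _ dg); apply Hd).
  assert (H : is_RInt (fun x => df x * g x + f x * dg x) (-1) 1 (f 1 * g 1 - f (-1) * g (-1))).
  { apply (is_RInt_derive (fun x => f x * g x)); intros x Hx;
      rewrite Rmin_left, Rmax_right in Hx by lra.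
    - destruct (Hd x Hx) as [H1 H2]. exact (is_derive_mult f g x _ _ H1 H2 Rmult_comm).
    - apply (cont11_plus _ _ (cont11_mult _ _ Cdf Cg) (cont11_mult _ _ Cf Cdg)); exact Hx. }
  apply (is_RInt_unique (V := R_CompleteNormedModule)) in H.
  change (int11 (fun x => df x * g x + f x * dg x) = f 1 * g 1 - f (-1) * g (-1)) in H.
  rewrite int11_plus in H by solve_cont11. lra.
Qed.

Lemma int11_dlegendre_mul_pow j k : int11 (fun x => dlegendre j x * x ^ k) =
  1 - (-1) ^ j * (-1) ^ k - INR k * int11 (fun x => legendre j x * x ^ pred k).
Proof.
  assert (Dk : forall x, is_derive (fun y => y ^ k) x (INR k * x ^ pred k)).
  { intros x. pose proof (is_derive_pow (fun y => y) k x 1 (is_derive_id x)) as H.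
    simpl in H. rewrite Rmult_1_r in H. exact H. }
  rewrite (int11_by_parts (legendre j) (dlegendre j) (fun y => y ^ k) (fun y => INR k * y ^ pred k)).
  - rewrite legendre_at_1, legendre_at_m1, pow1, <- int11_scal by solve_cont11.
    f_equal; [ring|]. apply int11_ext. intros; ring.
  - intros x _. split; [apply is_derive_legendre | apply Dk].
  - solve_cont11.
  - solve_cont11.
Qed.

(* Writing (2l+1) P_l = P'_(l+1) - P'_(l-1) and integrating by parts lowers the power of x. *)
Lemma int11_legendre_mul_pow k l : (k < l)%nat -> int11 (fun x => legendre l x * x ^ k) = 0.
Proof.
  revert l. induction k as [|k IH]; intros [|m] Hl; try lia.
  all: assert (Hpos : 0 < 2 * INR (S m) + 1) by (pose proof (pos_INR (S m)); lra).
  all: apply Rmult_eq_reg_l with (2 * INR (S m) + 1); [|lra]; rewrite Rmult_0_r.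
  all: rewrite <- int11_scal by solve_cont11.
  - rewrite (int11_ext _ (fun x => dlegendre (S (S m)) x * x ^ 0 - dlegendre m x * x ^ 0))
      by (intros x _; rewrite <- Rmult_minus_distr_r, (dlegendre_succ_sub_pred (S m)); ring).
    rewrite int11_minus, !int11_dlegendre_mul_pow by solve_cont11.
    simpl INR. simpl pow. ring.
  - rewrite (int11_ext _ (fun x => dlegendre (S (S m)) x * x ^ S k - dlegendre m x * x ^ S k))
      by (intros x _; rewrite <- Rmult_minus_distr_r, (dlegendre_succ_sub_pred (S m)); ring).
    rewrite int11_minus, !int11_dlegendre_mul_pow by solve_cont11.
    simpl pred. rewrite !IH by lia. simpl pow. ring.
Qed.

Lemma continuous_vanishing_right (f : R -> R) d : 0 < d -> continuous f 0 ->
  (forall s, 0 < s < d -> f s = 0) -> f 0 = 0.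
Proof.
  intros Hd Hc Hz.
  assert (L1 : filterlim f (at_right 0) (locally (f 0))).
  { apply (filterlim_filter_le_1 (F := locally 0)); [apply filter_le_within | exact Hc]. }
  assert (L2 : filterlim f (at_right 0) (locally 0)).
  { apply (filterlim_ext_loc (fun _ => 0)); [|apply filterlim_const].
    exists (mkposreal d Hd). intros s Hs Hs0. symmetry. apply Hz.
    apply Rabs_lt_between' in Hs. simpl in Hs. unfold Rminus in Hs. lra. }
  exact (filterlim_locally_unique _ _ _ L1 L2).
Qed.

Lemma continuous_poly (c : nat -> R) N x : continuous (fun s => sum_f_R0 (fun k => c k * s ^ k) N) x.
Proof.
  apply continuity_pt_filterlim, continuity_pt_finite_SF. intros k _.
  apply continuity_pt_mult; [apply continuity_pt_const; intros ? ?; reflexivity|].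
  apply derivable_continuous_pt, derivable_pt_pow.
Qed.

Lemma poly_vanishing_right_coef N : forall (c : nat -> R) d, 0 < d ->
  (forall s, 0 < s < d -> sum_f_R0 (fun k => c k * s ^ k) N = 0) ->
  forall k, (k <= N)%nat -> c k = 0.
Proof.
  induction N as [|N IH]; intros c d Hd H k Hk.
  - assert (k = 0)%nat by lia. subst. specialize (H (d / 2) ltac:(lra)). simpl in H. lra.
  - assert (E : forall s, sum_f_R0 (fun k => c k * s ^ k) (S N)
                          = c 0%nat + s * sum_f_R0 (fun k => c (S k) * s ^ k) N).
    { intros s. rewrite decomp_sum by lia. simpl pred. rewrite scal_sum. f_equal; [simpl; ring|].
      apply sum_eq; intros; simpl; ring. }
    assert (C0 : c 0%nat = 0).
    { pose proof (continuous_vanishing_right _ d Hd (continuous_poly c (S N) 0) H) as H0.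
      cbv beta in H0. rewrite E in H0. lra. }
    destruct k as [|k]; [exact C0|].
    apply (IH (fun k => c (S k)) d Hd); [|lia].
    intros s Hs. specialize (H s Hs). rewrite E, C0 in H.
    apply Rmult_eq_reg_l with s; lra.
Qed.

Definition in_span (B : nat -> R -> R) (d : nat) (f : R -> R) :=
  exists a : nat -> R, forall x, f x = sum_f_R0 (fun k => a k * B k x) d.

Section Span.
Variable B : nat -> R -> R.

Lemma in_span_ext d f g : (forall x, f x = g x) -> in_span B d f -> in_span B d g.
Proof. intros E [a Ha]. exists a. intros x. rewrite <- E. apply Ha. Qed.

Lemma in_span_plus d f g : in_span B d f -> in_span B d g -> in_span B d (fun x => f x + g x).
Proof.
  intros [a Ha] [b Hb]. exists (fun k => a k + b k). intros x.
  rewrite Ha, Hb, <- sum_plus. apply sum_eq. intros; ring.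
Qed.

Lemma in_span_scal d c f : in_span B d f -> in_span B d (fun x => c * f x).
Proof.
  intros [a Ha]. exists (fun k => c * a k). intros x.
  rewrite Ha, scal_sum. apply sum_eq. intros; ring.
Qed.

Lemma in_span_sum d (g : nat -> R -> R) N : (forall k, (k <= N)%nat -> in_span B d (g k)) ->
  in_span B d (fun x => sum_f_R0 (fun k => g k x) N).
Proof.
  intros H. induction N as [|N IH]; [apply H; lia|].
  apply in_span_plus; [apply IH; intros; apply H; lia | apply H; lia].
Qed.

Lemma in_span_le d d' f : (d <= d')%nat -> in_span B d f -> in_span B d' f.
Proof.
  intros Hle [a Ha]. exists (fun k => if le_lt_dec k d then a k else 0). intros x.
  rewrite Ha. induction Hle as [|d' Hle IH]; [apply sum_eq; intros i Hi|].
  - destruct (le_lt_dec i d); [reflexivity | lia].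
  - rewrite tech5, <- IH. destruct (le_lt_dec (S d') d); [lia | ring].
Qed.

Lemma in_span_basis i d : (i <= d)%nat -> in_span B d (B i).
Proof.
  intros Hi. apply (in_span_le i); [exact Hi|].
  exists (fun k => if Nat.eq_dec k i then 1 else 0). intros x.
  destruct i as [|i]; [simpl; destruct (Nat.eq_dec 0 0); [ring | lia]|].
  rewrite tech5, sum_eq_R0.
  - destruct (Nat.eq_dec (S i) (S i)); [ring | lia].
  - intros k Hk. destruct (Nat.eq_dec k (S i)); [lia | ring].
Qed.

End Span.

Definition monomial (k : nat) (x : R) := x ^ k.

Lemma in_span_monomial_mul_id d f : in_span monomial d f -> in_span monomial (S d) (fun x => x * f x).
Proof.
  intros [a Ha]. exists (fun k => match k with O => 0 | S k' => a k' end). intros x.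
  rewrite decomp_sum by lia. simpl pred. rewrite Ha, scal_sum.
  unfold monomial. simpl. rewrite Rmult_0_l, Rplus_0_l.
  apply sum_eq. intros; ring.
Qed.

Lemma legendre_in_span_monomial m : in_span monomial m (legendre m).
Proof.
  cut (in_span monomial m (legendre m) /\ in_span monomial (S m) (legendre (S m))); [tauto|].
  assert (H0 : in_span monomial 0 (legendre 0)).
  { exists (fun _ => 1). intros x. unfold monomial. simpl. ring. }
  induction m as [|m [Hm HSm]].
  - split; [exact H0|].
    apply (in_span_ext _ _ (fun x => x * legendre 0 x)); [intros x; simpl; ring|].
    apply in_span_monomial_mul_id, H0.
  - split; [exact HSm|].
    pose proof (INR_succ_pos (S m)).
    apply (in_span_ext _ _ (fun x => (2 * INR (S m) + 1) / (INR (S m) + 1) * (x * legendre (S m) x)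
                                     + (- INR (S m) / (INR (S m) + 1)) * legendre m x)).
    { intros x. rewrite (legendre_succ (S m)). simpl pred. field. lra. }
    apply in_span_plus; apply in_span_scal.
    + apply in_span_monomial_mul_id, HSm.
    + apply (in_span_le _ m); [lia | exact Hm].
Qed.

Lemma in_span_legendre_mul_id d f : in_span legendre d f -> in_span legendre (S d) (fun x => x * f x).
Proof.
  intros [a Ha].
  apply (in_span_ext _ _ (fun x => sum_f_R0 (fun k => a k * (x * legendre k x)) d)).
  { intros x. rewrite Ha, scal_sum. apply sum_eq. intros; ring. }
  apply in_span_sum. intros k Hk. apply in_span_scal. pose proof (pos_INR k).
  apply (in_span_ext _ _ (fun x => (INR k + 1) / (2 * INR k + 1) * legendre (S k) x
                                   + INR k / (2 * INR k + 1) * legendre (pred k) x)).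
  { intros x. rewrite mul_legendre. field. lra. }
  apply in_span_plus; apply in_span_scal; apply in_span_basis; lia.
Qed.

Lemma poly_in_span_legendre (c : nat -> R) n :
  in_span legendre n (fun x => sum_f_R0 (fun k => c k * x ^ k) n).
Proof.
  apply in_span_sum. intros k Hk. apply in_span_scal. apply (in_span_le _ k); [lia|].
  clear Hk. induction k as [|k IH].
  - apply (in_span_ext _ _ (legendre 0)); [reflexivity | apply in_span_basis; lia].
  - apply (in_span_legendre_mul_id _ _ IH).
Qed.

Lemma int11_legendre_orth_poly l d f : (d < l)%nat -> in_span monomial d f ->
  int11 (fun x => legendre l x * f x) = 0.
Proof.
  intros Hd [a Ha].
  rewrite (int11_ext _ (fun x => sum_f_R0 (fun k => a k * (legendre l x * x ^ k)) d)).
  2:{ intros x _. rewrite Ha, scal_sum. apply sum_eq. intros; unfold monomial; ring. }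
  rewrite int11_sum by solve_cont11.
  apply sum_eq_R0. intros k Hk.
  rewrite int11_scal, int11_legendre_mul_pow by (solve_cont11 || lia). ring.
Qed.

Lemma int11_legendre_orth l m : l <> m -> int11 (fun x => legendre l x * legendre m x) = 0.
Proof.
  intros H. destruct (le_lt_dec l m).
  - rewrite (int11_ext _ (fun x => legendre m x * legendre l x)) by (intros; ring).
    apply (int11_legendre_orth_poly m l); [lia | apply legendre_in_span_monomial].
  - apply (int11_legendre_orth_poly l m); [lia | apply legendre_in_span_monomial].
Qed.

Lemma int11_legendre_sq l : int11 (fun x => legendre l x * legendre l x) = 2 / (2 * INR l + 1).
Proof.
  induction l as [|l IH].
  - unfold int11. simpl. rewrite RInt_const. unfold scal; simpl; unfold mult; simpl. field.
  - pose proof (pos_INR l).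
    rewrite (int11_ext _ (fun x => (2 * INR l + 1) / (INR l + 1) * (x * legendre (S l) x * legendre l x)
                                   - INR l / (INR l + 1) * (legendre (S l) x * legendre (pred l) x))).
    2:{ intros x _. rewrite (legendre_succ l x) at 2. field. lra. }
    rewrite int11_minus, !int11_scal by solve_cont11.
    rewrite (int11_ext (fun x => x * _ * _)
               (fun x => (INR (S l) + 1) / (2 * INR (S l) + 1) * (legendre (S (S l)) x * legendre l x)
                         + INR (S l) / (2 * INR (S l) + 1) * (legendre l x * legendre l x))).
    2:{ intros x _. rewrite mul_legendre. simpl pred. rewrite S_INR. field. lra. }
    rewrite int11_plus, !int11_scal by solve_cont11.
    rewrite (int11_legendre_orth (S l) (pred l)), (int11_legendre_orth (S (S l)) l), IH by lia.
    rewrite S_INR. field. lra.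
Qed.

(* Distance between the point [t] of the axis and the point of height [x] on the unit sphere. *)
Definition axis_dist (t x : R) := sqrt (1 - 2 * x * t + t ^ 2).

Section Kernel.
Variable t : R.
Hypothesis Ht : 0 < t < 1.

Lemma axis_dist_sq_pos x : -1 <= x <= 1 -> 0 < 1 - 2 * x * t + t ^ 2.
Proof. intros Hx. nra. Qed.

Lemma axis_dist_pos x : -1 <= x <= 1 -> 0 < axis_dist t x.
Proof. intros Hx. apply sqrt_lt_R0, axis_dist_sq_pos, Hx. Qed.

Lemma axis_dist_eq x : -1 <= x <= 1 -> axis_dist t x = (1 - 2 * x * t + t ^ 2) * / axis_dist t x.
Proof.
  intros Hx. pose proof (axis_dist_pos x Hx). pose proof (axis_dist_sq_pos x Hx).
  rewrite <- (sqrt_sqrt (1 - 2 * x * t + t ^ 2)) by lra. fold (axis_dist t x). field. lra.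
Qed.

Lemma is_derive_axis_dist x : -1 <= x <= 1 -> is_derive (axis_dist t) x (- t * / axis_dist t x).
Proof.
  intros Hx. pose proof (axis_dist_pos x Hx).
  assert (HQ : is_derive (fun y => 1 - 2 * y * t + t ^ 2) x (-2 * t)) by (auto_derive; auto; ring).
  replace (- t * / axis_dist t x) with (-2 * t / (2 * sqrt (1 - 2 * x * t + t ^ 2)))
    by (fold (axis_dist t x); field; lra).
  exact (is_derive_sqrt _ x _ HQ (axis_dist_sq_pos x Hx)).
Qed.

Lemma cont11_axis_dist : cont11 (axis_dist t).
Proof. apply (cont11_of_derive _ _ is_derive_axis_dist). Qed.

Lemma cont11_inv_axis_dist : cont11 (fun x => / axis_dist t x).
Proof.
  intros x Hx. apply (continuous_Rinv_comp (axis_dist t)).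
  - apply cont11_axis_dist, Hx.
  - pose proof (axis_dist_pos x Hx); lra.
Qed.

#[local] Hint Resolve cont11_axis_dist cont11_inv_axis_dist : cont11.

Lemma axis_dist_at_1 : axis_dist t 1 = 1 - t.
Proof.
  unfold axis_dist. replace (1 - 2 * 1 * t + t ^ 2) with ((1 - t) ^ 2) by ring.
  apply sqrt_pow2. lra.
Qed.

Lemma axis_dist_at_m1 : axis_dist t (-1) = 1 + t.
Proof.
  unfold axis_dist. replace (1 - 2 * -1 * t + t ^ 2) with ((1 + t) ^ 2) by ring.
  apply sqrt_pow2. lra.
Qed.

Definition legendre_moment (l : nat) := int11 (fun x => legendre l x * / axis_dist t x).

(* [- axis_dist t / t] is a primitive of the kernel. *)
Lemma legendre_moment_0 : legendre_moment 0 = 2.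
Proof.
  assert (H : is_RInt (fun x => / axis_dist t x) (-1) 1
                (minus (- axis_dist t 1 / t) (- axis_dist t (-1) / t))).
  { apply (is_RInt_derive (V := R_CompleteNormedModule) (fun x => - axis_dist t x / t));
      intros x Hx; rewrite Rmin_left, Rmax_right in Hx by lra.
    - apply (is_derive_ext (fun y => (- / t) * axis_dist t y)).
      { intros y. match goal with |- ?a = ?b => change (@eq R a b) end. field. lra. }
      pose proof (axis_dist_pos x Hx).
      replace (/ axis_dist t x) with ((- / t) * (- t * / axis_dist t x)) by (field; lra).
      apply (is_derive_scal (axis_dist t) x (- / t)), is_derive_axis_dist, Hx.
    - apply cont11_inv_axis_dist, Hx. }
  apply (is_RInt_unique (V := R_CompleteNormedModule)) in H.
  unfold legendre_moment. simpl legendre.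
  rewrite (int11_ext _ (fun x => / axis_dist t x)) by (intros; ring).
  unfold int11. rewrite H. unfold minus, plus, opp; simpl. rewrite axis_dist_at_1, axis_dist_at_m1. field. lra.
Qed.

Lemma int11_dlegendre_mul_axis_dist j : int11 (fun x => dlegendre j x * axis_dist t x) =
  (1 - t) - (-1) ^ j * (1 + t) + t * legendre_moment j.
Proof.
  rewrite (int11_by_parts (legendre j) (dlegendre j) (axis_dist t) (fun x => - t * / axis_dist t x)).
  - rewrite axis_dist_at_1, axis_dist_at_m1, legendre_at_1, legendre_at_m1.
    unfold legendre_moment.
    rewrite (int11_ext _ (fun x => (- t) * (legendre j x * / axis_dist t x))) by (intros; ring).
    rewrite int11_scal by solve_cont11. ring.
  - intros x Hx. split; [apply is_derive_legendre | apply is_derive_axis_dist, Hx].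
  - solve_cont11.
  - solve_cont11.
Qed.

(* Two expressions for the integral of [P_l * axis_dist]: via x P_l (three-term recursion) and
   via (2l+1) P_l = P'_(l+1) - P'_(l-1) (integration by parts). *)
Lemma legendre_moment_recursion l :
  (2 * INR l + 1) * ((1 + t ^ 2) * legendre_moment l)
  - 2 * t * ((INR l + 1) * legendre_moment (S l) + INR l * legendre_moment (pred l)) =
  (1 + t) * ((-1) ^ pred l + (-1) ^ l) + t * (legendre_moment (S l) - legendre_moment (pred l)).
Proof.
  pose proof (pos_INR l).
  set (L := int11 (fun x => legendre l x * axis_dist t x)).
  assert (E1 : L = (1 + t ^ 2) * legendre_moment l
                   - 2 * t * (((INR l + 1) * legendre_moment (S l) + INR l * legendre_moment (pred l))
                              / (2 * INR l + 1))).
  { unfold L, legendre_moment.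
    rewrite (int11_ext _ (fun x => (1 + t ^ 2) * (legendre l x * / axis_dist t x)
      - 2 * t * ((INR l + 1) / (2 * INR l + 1) * (legendre (S l) x * / axis_dist t x)
                 + INR l / (2 * INR l + 1) * (legendre (pred l) x * / axis_dist t x)))).
    - rewrite int11_minus, !int11_scal, int11_plus, !int11_scal by solve_cont11.
      field. lra.
    - intros x Hx. pose proof (axis_dist_pos x Hx). rewrite axis_dist_eq at 1 by exact Hx.
      replace (legendre l x * ((1 - 2 * x * t + t ^ 2) * / axis_dist t x))
        with ((1 + t ^ 2) * (legendre l x * / axis_dist t x)
              - 2 * t * ((x * legendre l x) * / axis_dist t x)) by ring.
      rewrite mul_legendre. field. lra. }
  assert (E2 : (2 * INR l + 1) * L = int11 (fun x => dlegendre (S l) x * axis_dist t x)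
                                     - int11 (fun x => dlegendre (pred l) x * axis_dist t x)).
  { unfold L. rewrite <- int11_scal, <- int11_minus by solve_cont11.
    apply int11_ext. intros x _. rewrite <- Rmult_minus_distr_r, dlegendre_succ_sub_pred. ring. }
  rewrite !int11_dlegendre_mul_axis_dist, E1 in E2.
  replace ((2 * INR l + 1) * ((1 + t ^ 2) * legendre_moment l) - _)
    with ((2 * INR l + 1) * ((1 + t ^ 2) * legendre_moment l
          - 2 * t * (((INR l + 1) * legendre_moment (S l) + INR l * legendre_moment (pred l))
                     / (2 * INR l + 1)))) by (field; lra).
  rewrite E2. simpl pow. ring.
Qed.

Lemma legendre_moment_eq l : legendre_moment l = 2 * t ^ l / (2 * INR l + 1).
Proof.
  assert (K : forall a b c d : R, c = d -> a - b = - (c - d) -> a = b) by (intros; lra).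
  cut (legendre_moment l = 2 * t ^ l / (2 * INR l + 1) /\
       legendre_moment (S l) = 2 * t ^ S l / (2 * INR (S l) + 1)); [tauto|].
  induction l as [|m [H0 H1]].
  - pose proof (legendre_moment_recursion 0) as H. simpl pred in H.
    rewrite legendre_moment_0 in *. split; [simpl; field|].
    assert (E : 3 * t * legendre_moment 1 = 2 * t ^ 2).
    { match type of H with ?c = ?d => apply (K _ _ c d H) end. simpl. ring. }
    apply Rmult_eq_reg_l with (3 * t); [|lra]. rewrite E. simpl. field.
  - split; [exact H1|].
    pose proof (legendre_moment_recursion (S m)) as H. simpl pred in H.
    assert (E : t * (2 * INR (S m) + 3) * legendre_moment (S (S m))
                = (2 * INR (S m) + 1) * (1 + t ^ 2) * legendre_moment (S m)
                  - t * (2 * INR m + 1) * legendre_moment m).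
    { match type of H with ?c = ?d => apply (K _ _ c d H) end. rewrite S_INR. simpl pow. ring. }
    rewrite H0, H1 in E. pose proof (pos_INR m).
    apply Rmult_eq_reg_l with (t * (2 * INR (S m) + 3)); [|rewrite S_INR; nra].
    rewrite E, !S_INR. simpl pow. field. lra.
Qed.

End Kernel.

#[export] Hint Resolve cont11_inv_axis_dist : cont11.

Definition legendre_series (a : nat -> R) (n : nat) (y : R) := sum_f_R0 (fun k => a k * legendre k y) n.

Definition legendre_series_coef (a : nat -> R) (n j : nat) := if le_lt_dec j n then a j else 0.

Lemma cont11_legendre_series a n : cont11 (legendre_series a n).
Proof. unfold legendre_series. solve_cont11. Qed.

#[export] Hint Resolve cont11_legendre_series : cont11.

Lemma int11_legendre_mul_series a n j :
  int11 (fun y => legendre j y * legendre_series a n y)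
  = legendre_series_coef a n j * (2 / (2 * INR j + 1)).
Proof.
  unfold legendre_series, legendre_series_coef.
  rewrite (int11_ext _ (fun y => sum_f_R0 (fun k => a k * (legendre k y * legendre j y)) n))
    by (intros y _; rewrite scal_sum; apply sum_eq; intros; ring).
  rewrite int11_sum by solve_cont11.
  rewrite (sum_eq _ (fun k => if Nat.eq_dec k j then a j * (2 / (2 * INR j + 1)) else 0)).
  - destruct (le_lt_dec j n) as [Hj | Hj].
    + induction Hj as [|n Hj IH].
      * destruct j as [|j]; [simpl; destruct (Nat.eq_dec 0 0); [ring | lia]|].
        rewrite tech5, sum_eq_R0; [destruct (Nat.eq_dec (S j) (S j)); [ring | lia]|].
        intros k Hk. destruct (Nat.eq_dec k (S j)); [lia | ring].
      * rewrite tech5, IH. destruct (Nat.eq_dec (S n) j); [lia | ring].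
    + rewrite sum_eq_R0; [ring|]. intros k Hk. destruct (Nat.eq_dec k j); [lia | ring].
  - intros k Hk. rewrite int11_scal by solve_cont11. destruct (Nat.eq_dec k j) as [<- | Hkj].
    + rewrite int11_legendre_sq. ring.
    + rewrite int11_legendre_orth by exact Hkj. ring.
Qed.

Lemma int11_id_mul_series_sq a n :
  int11 (fun y => y * legendre_series a n y * legendre_series a n y) =
  sum_f_R0 (fun l => a l *
    ((INR l + 1) * legendre_series_coef a n (S l) * (2 / (2 * INR (S l) + 1))
     + INR l * legendre_series_coef a n (pred l) * (2 / (2 * INR (pred l) + 1)))
    / (2 * INR l + 1)) n.
Proof.
  rewrite (int11_ext _ (fun y => sum_f_R0 (fun l =>
             a l * ((y * legendre l y) * legendre_series a n y)) n)).
  2:{ intros y _. rewrite Rmult_comm, <- Rmult_assoc.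
      unfold legendre_series at 2. rewrite scal_sum. apply sum_eq. intros; ring. }
  rewrite int11_sum by solve_cont11.
  apply sum_eq. intros l _. pose proof (pos_INR l).
  rewrite int11_scal by solve_cont11.
  rewrite (int11_ext _ (fun y => (INR l + 1) / (2 * INR l + 1) * (legendre (S l) y * legendre_series a n y)
                                 + INR l / (2 * INR l + 1) * (legendre (pred l) y * legendre_series a n y)))
    by (intros y _; rewrite mul_legendre; field; lra).
  rewrite int11_plus, !int11_scal by solve_cont11.
  rewrite !int11_legendre_mul_series.
  pose proof (pos_INR (S l)). pose proof (pos_INR (pred l)). field. lra.
Qed.

Lemma int11_series_mul_inv_axis_dist a n t : 0 < t < 1 ->
  int11 (fun y => legendre_series a n y * / axis_dist t y)
  = sum_f_R0 (fun l => a l * (2 * t ^ l / (2 * INR l + 1))) n.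
Proof.
  intros Ht. unfold legendre_series.
  rewrite (int11_ext _ (fun y => sum_f_R0 (fun l => a l * (legendre l y * / axis_dist t y)) n))
    by (intros y _; rewrite Rmult_comm, scal_sum; apply sum_eq; intros; ring).
  rewrite int11_sum by solve_cont11.
  apply sum_eq. intros l _. rewrite int11_scal by solve_cont11.
  fold (legendre_moment t l). rewrite legendre_moment_eq by exact Ht. reflexivity.
Qed.

(* The two halves of the sum are the same sum over neighbouring pairs (l, l+1), shifted by one. *)
Lemma series_force_sum_closed_form (a b : nat -> R) (eps0 r : R) m : 0 < r ->
  (forall l, (l <= S m)%nat -> a l = eps0 * (2 * INR l + 1) * b (S l) * r ^ l / r) ->
  r ^ 2 * sum_f_R0 (fun l => a l *
    ((INR l + 1) * legendre_series_coef a (S m) (S l) * (2 / (2 * INR (S l) + 1))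
     + INR l * legendre_series_coef a (S m) (pred l) * (2 / (2 * INR (pred l) + 1)))
    / (2 * INR l + 1)) (S m)
  = 4 * eps0 ^ 2 * sum_f_R0 (fun k => INR (S k) * r ^ (2 * k + 1) * b (S k) * b (S (S k))) m.
Proof.
  intros Hr Ha.
  set (U := fun l => a l * (INR l + 1) * legendre_series_coef a (S m) (S l)
                     * (2 / (2 * INR (S l) + 1)) / (2 * INR l + 1)).
  set (V := fun l => a l * INR l * legendre_series_coef a (S m) (pred l)
                     * (2 / (2 * INR (pred l) + 1)) / (2 * INR l + 1)).
  rewrite (sum_eq _ (fun l => U l + V l)).
  2:{ intros l _. unfold U, V, Rdiv. ring. }
  rewrite sum_plus, tech5, (decomp_sum V (S m)) by lia. simpl pred.
  assert (U0 : U (S m) = 0).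
  { unfold U, legendre_series_coef. destruct (le_lt_dec (S (S m)) (S m)); [lia | unfold Rdiv; ring]. }
  assert (V0 : V 0%nat = 0) by (unfold V; simpl INR; unfold Rdiv; ring).
  rewrite U0, V0, (sum_eq (fun i => V (S i)) U).
  2:{ intros l Hl. unfold U, V, legendre_series_coef. simpl pred.
      destruct (le_lt_dec (S l) (S m)); [|lia]. destruct (le_lt_dec l (S m)); [|lia].
      rewrite S_INR. pose proof (pos_INR l). field. lra. }
  replace (r ^ 2 * (sum_f_R0 U m + 0 + (0 + sum_f_R0 U m)))
    with (r ^ 2 * 2 * sum_f_R0 U m) by ring.
  rewrite !scal_sum. apply sum_eq. intros l Hl.
  unfold U, legendre_series_coef. destruct (le_lt_dec (S l) (S m)); [|lia].
  rewrite (Ha l), (Ha (S l)) by lia.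
  replace (2 * l + 1)%nat with (l + S l)%nat by lia. rewrite pow_add, !S_INR.
  pose proof (pos_INR l). field. lra.
Qed.

Lemma RInt_rescale (f : R -> R) r : 0 < r -> cont11 f ->
  RInt (fun z => f (z / r)) (-r) r = r * int11 f.
Proof.
  intros Hr Cf.
  assert (E1 : / r * - r + 0 = -1) by (field; lra).
  assert (E2 : / r * r + 0 = 1) by (field; lra).
  assert (Hf : ex_RInt f (/ r * - r + 0) (/ r * r + 0)) by (rewrite E1, E2; apply ex_RInt11, Cf).
  pose proof (RInt_comp_lin f (/ r) 0 (-r) r Hf) as C.
  rewrite E1, E2 in C. unfold int11. rewrite <- C. symmetry.
  etransitivity; [exact (eq_sym (RInt_scal _ _ _ r (ex_RInt_comp_lin f (/ r) 0 (-r) r Hf)))|].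
  apply RInt_ext. intros x _. unfold scal; simpl; unfold mult; simpl.
  replace (/ r * x + 0) with (x / r) by (field; lra). field. lra.
Qed.

Lemma sqrt_dist_rescale r s z : 0 < r -> -r <= z <= r -> 0 < s < r ->
  sqrt (s ^ 2 + r ^ 2 - 2 * s * z) = r * axis_dist (s / r) (z / r).
Proof.
  intros Hr Hz Hs. unfold axis_dist.
  assert (Hx : -1 <= z / r <= 1).
  { split; apply (Rmult_le_reg_r r); try lra; field_simplify; lra. }
  assert (Ht : 0 < s / r < 1).
  { split; [apply Rdiv_lt_0_compat; lra|]. apply (Rmult_lt_reg_r r); [lra|]. field_simplify; lra. }
  pose proof (axis_dist_sq_pos (s / r) Ht (z / r) Hx).
  replace (s ^ 2 + r ^ 2 - 2 * s * z) with (r ^ 2 * (1 - 2 * (z / r) * (s / r) + (s / r) ^ 2))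
    by (field; lra).
  rewrite sqrt_mult, sqrt_pow2 by (try apply pow2_ge_0; lra). reflexivity.
Qed.

Lemma charge_legendre_expansion r n c (sigma : R -> R) : 0 < r ->
  (forall z, -r <= z <= r -> sigma z = peval c n z) ->
  exists a, forall z, -r <= z <= r -> sigma z = legendre_series a n (z / r).
Proof.
  intros Hr Hc. destruct (poly_in_span_legendre (fun k => c k * r ^ k) n) as [a Ha].
  exists a. intros z Hz. rewrite Hc by exact Hz. unfold legendre_series. rewrite <- Ha.
  unfold peval. apply sum_eq. intros k _.
  unfold Rdiv. rewrite Rpow_mult_distr, pow_inv. field. apply pow_nonzero. lra.
Qed.

Lemma RInt_force_series r a n (sigma : R -> R) : 0 < r ->
  (forall z, -r <= z <= r -> sigma z = legendre_series a n (z / r)) ->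
  RInt (fun z => z * sigma z ^ 2) (-r) r
  = r ^ 2 * int11 (fun y => y * legendre_series a n y * legendre_series a n y).
Proof.
  intros Hr Ha.
  rewrite (RInt_ext _ (fun z => (fun y => r * (y * legendre_series a n y * legendre_series a n y)) (z / r))).
  - rewrite (RInt_rescale (fun y => r * (y * legendre_series a n y * legendre_series a n y)) r),
      int11_scal by (solve_cont11 || exact Hr).
    match goal with |- ?u = ?v => change (@eq R u v) end. ring.
  - intros z Hz. rewrite Rmin_left, Rmax_right in Hz by lra.
    rewrite Ha by lra. match goal with |- ?u = ?v => change (@eq R u v) end. field. lra.
Qed.

(* Matching the potential of the ball with that of the field, as polynomials in [s] on [0 < s < r]. *)
Lemma charge_coefficients (r eps0 : R) n b (phi0 sigma : R -> R) a : 0 < r ->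
  (forall s, - phi0 s = sum_f_R0 (fun k => b (S k) * s ^ k) n) ->
  (forall z, -r <= z <= r -> sigma z = legendre_series a n (z / r)) ->
  (forall s, -r < s < r ->
     RInt (fun z => r * sigma z / sqrt (s ^ 2 + r ^ 2 - 2 * s * z)) (-r) r = - 2 * eps0 * phi0 s) ->
  forall l, (l <= n)%nat -> a l = eps0 * (2 * INR l + 1) * b (S l) * r ^ l / r.
Proof.
  intros Hr Hphi Ha Heq.
  assert (Z : forall l, (l <= n)%nat ->
                r * a l * (2 / (2 * INR l + 1)) / r ^ l - 2 * eps0 * b (S l) = 0).
  { apply (poly_vanishing_right_coef n _ r Hr). intros s Hs.
    assert (Ht : 0 < s / r < 1).
    { split; [apply Rdiv_lt_0_compat; lra|]. apply (Rmult_lt_reg_r r); [lra|]. field_simplify; lra. }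
    assert (E : RInt (fun z => r * sigma z / sqrt (s ^ 2 + r ^ 2 - 2 * s * z)) (-r) r
                = r * sum_f_R0 (fun l => a l * (2 * (s / r) ^ l / (2 * INR l + 1))) n).
    { rewrite (RInt_ext _ (fun z => (fun y => legendre_series a n y * / axis_dist (s / r) y) (z / r))).
      - rewrite (RInt_rescale (fun y => legendre_series a n y * / axis_dist (s / r) y) r),
          int11_series_mul_inv_axis_dist by (solve_cont11 || lra). reflexivity.
      - intros z Hz. rewrite Rmin_left, Rmax_right in Hz by lra.
        assert (Hx : -1 <= z / r <= 1).
        { split; apply (Rmult_le_reg_r r); try lra; field_simplify; lra. }
        pose proof (axis_dist_pos (s / r) Ht (z / r) Hx).
        rewrite Ha, sqrt_dist_rescale by lra.
        match goal with |- ?u = ?v => change (@eq R u v) end. field. lra. }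
    rewrite Heq in E by lra.
    rewrite (sum_eq _ (fun l => (a l * (2 * (s / r) ^ l / (2 * INR l + 1))) * r
                                - (b (S l) * s ^ l) * (2 * eps0))).
    - rewrite minus_sum, <- !scal_sum, <- Hphi. lra.
    - intros l _. unfold Rdiv. rewrite Rpow_mult_distr, pow_inv.
      pose proof (pos_INR l). pose proof (pow_lt r l Hr). field. lra. }
  intros l Hl. specialize (Z l Hl).
  pose proof (pos_INR l). pose proof (pow_lt r l Hr).
  apply Rminus_diag_uniq in Z.
  replace (a l) with (r * a l * (2 / (2 * INR l + 1)) / r ^ l * ((2 * INR l + 1) * r ^ l / (2 * r)))
    by (field; lra).
  rewrite Z. field. lra.
Qed.

Theorem theorem3 (r eps0 : R) (n : nat) (b : nat -> R) (phi0 sigma : R -> R) :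
  0 < r -> 0 < eps0 -> (1 <= n)%nat ->
  b (S n) <> 0 ->
  (forall s, - phi0 s = sum_f_R0 (fun k => b (S k) * s ^ k) n) ->
  (exists c : nat -> R, forall z, -r <= z <= r -> sigma z = peval c n z) ->
  (forall s, -r < s < r ->
     RInt (fun z => r * sigma z / sqrt (s ^ 2 + r ^ 2 - 2 * s * z)) (-r) r
     = - 2 * eps0 * phi0 s) ->
  PI / eps0 * RInt (fun z => z * sigma z ^ 2) (-r) r
  = 4 * PI * eps0 *
    sum_f_R0 (fun k => INR (S k) * r ^ (2 * k + 1) * b (S k) * b (S (S k))) (n - 1).
Proof.
  intros Hr He Hn _ Hphi [c Hc] Heq.
  destruct (charge_legendre_expansion r n c sigma Hr Hc) as [a Ha].
  pose proof (charge_coefficients r eps0 n b phi0 sigma a Hr Hphi Ha Heq) as Hcoef.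
  rewrite (RInt_force_series r a n sigma Hr Ha), int11_id_mul_series_sq.
  destruct n as [|m]; [lia|]. replace (S m - 1)%nat with m by lia.
  rewrite (series_force_sum_closed_form a b eps0 r m Hr Hcoef). field. lra.
Qed.
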